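(* For every integer $n\ge 6$ and every integer $t$ with $1\le t\le n-3$, $\mathrm{wdim}_{2n-2t-1}(K_n\times K_n)=n^2-tn-\left\lfloor \frac{n}{t+1}\right\rfloor$.
   Context: $K_n\times K_n$ is the direct product of two complete graphs on $n$ vertices: vertex set $[n]\times[n]$ with $[n]=\{1,\dots,n\}$, and $(i,j)$ adjacent to $(i',j')$ iff $i\ne i'$ and $j\ne j'$. For a connected graph $G$ with distance $d_G$, vertices $x,y,z$ and $S\subseteq V(G)$, let $\Delta_z(x,y)=|d_G(x,z)-d_G(y,z)|$ and $\Delta_S(x,y)=\sum_{z\in S}\Delta_z(x,y)$. A set $S$ is a weak $k$-resolving set if $\Delta_S(x,y)\ge k$ for all distinct $x,y\in V(G)$, and $\mathrm{wdim}_k(G)$ is the minimum cardinality of a weak $k$-resolving set of $G$. *)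

From mathcomp Require Import all_boot.
Set Implicit Arguments. Unset Strict Implicit. Unset Printing Implicit Defensive.

Section Dist.
Variables (T : finType) (e : rel T).

Fixpoint ball (k : nat) (x : T) : {set T} :=
  match k with
  | 0 => [set x]
  | k'.+1 => ball k' x :|: [set y | [exists z in ball k' x, e z y]]
  end.

(* shortest-path distance: least k with y in ball k x (in a connected graph
   this is always < #|T|; otherwise the value #|T| is returned) *)
Definition gdist (x y : T) : nat := find (fun k => y \in ball k x) (iota 0 #|T|).

Definition absdiff (a b : nat) : nat := (a - b) + (b - a).

Definition Delta_z (z x y : T) : nat := absdiff (gdist x z) (gdist y z).

Definition Delta_S (S : {set T}) (x y : T) : nat := \sum_(z in S) Delta_z z x y.

Definition weak_k_resolving (k : nat) (S : {set T}) : Prop :=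
  forall x y : T, x != y -> k <= Delta_S S x y.

Definition is_wdim (k m : nat) : Prop :=
  (exists S : {set T}, weak_k_resolving k S /\ #|S| = m) /\
  (forall S : {set T}, weak_k_resolving k S -> m <= #|S|).
End Dist.

Definition KnxKn_adj (n : nat) : rel ('I_n * 'I_n) :=
  fun x y => (x.1 != y.1) && (x.2 != y.2).
Arguments KnxKn_adj n : clear implicits.

From mathcomp Require Import all_boot zify.
Set Implicit Arguments. Unset Strict Implicit. Unset Printing Implicit Defensive.

(* In K_n x K_n (n >= 3) all distances are 0, 1 or 2, so Delta_S of two
   vertices (a, b), (a, c) of a row is the number of vertices of S in the
   columns b and c plus the indicators of the two vertices; columns are
   symmetric, and vertices in general position obey a similar formula.
   Lower bound: if S is weak (2n-2t-1)-resolving, the complements R_j of the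
   columns of S satisfy |R_b| + |R_c| + [a in R_b] + [a in R_c] <= 2t + 3.
   Then columns of size t + 1 are pairwise disjoint, and a column of size at
   least t + 2 leaves little room for the others; either way
   sum_j |R_j| <= tn + floor(n/(t+1)).
   Upper bound: let W contain, in every column j, the t cells cyclically
   below the diagonal, i.e. rows j, ..., j + t - 1 mod n, plus the cell
   (j + t, j) when j is a multiple of t + 1 with j + t < n (there are
   floor(n/(t+1)) such "special" columns).  The windows [j, j + t] of the
   special columns are disjoint blocks, which makes the complement of W weak
   (2n-2t-1)-resolving. *)

Lemma sum_mem_card (T : finType) (A : {pred T}) : \sum_(x : T) (x \in A) = #|A|.
Proof. by rewrite -sum1_card [RHS]big_mkcond. Qed.

Lemma sum_card_disjoint (T I : finType) (R : I -> {set T}) (J : {pred I}) :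
  {in J &, forall b c, b != c -> [disjoint R b & R c]} ->
  \sum_(j in J) #|R j| <= #|T|.
Proof.
move=> disjR.
have -> : \sum_(j in J) #|R j| = \sum_(x : T) \sum_(j in J) (x \in R j).
  by rewrite exchange_big; apply: eq_bigr => j _; rewrite sum_mem_card.
rewrite -sum1_card leq_sum // => x _.
rewrite -big_mkcondr sum1dep_card; apply/card_le1_eqP => b c.
rewrite !inE => /andP[bJ xb] /andP[cJ xc]; apply/eqP/negPn/negP; rewrite eq_sym => bc.
by rewrite (disjointFr (disjR b c bJ cJ bc) xb) in xc.
Qed.

Section PairBound.
Variables (T I : finType) (t : nat) (R : I -> {set T}).
Hypothesis pair_bound : forall a b c, b != c ->
  #|R b| + #|R c| + (a \in R b) + (a \in R c) <= 2 * t + 3.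

Lemma card_pair_meet a b c : b != c -> a \in R b -> a \in R c ->
  #|R b| + #|R c| <= 2 * t + 1.
Proof. by move=> bc ab ac; have := pair_bound a bc; rewrite ab ac; lia. Qed.

Lemma card_pair_large b c : t.+2 <= #|R b| -> b != c ->
  #|R b| + #|R c| <= 2 * t + 1 + (2 * t + 2 <= #|T|).
Proof.
move=> large bc.
have [a ab] : exists a, a \in R b by apply/set0Pn; rewrite -card_gt0; lia.
have [/eqP disj | /set0Pn[a']] := boolP (R b :&: R c == set0).
  have := pair_bound a bc; have := max_card (R b :|: R c).
  by rewrite cardsU disj cards0 ab; case: leqP; lia.
by rewrite inE => /andP[a'b a'c]; have := card_pair_meet bc a'b a'c; lia.
Qed.

Lemma sum_card_large b : 1 < #|I| -> t.+2 <= #|R b| ->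
  \sum_j #|R j| <= t * #|I| + #|T| %/ t.+1.
Proof.
move=> I2 large; have pairK := card_pair_large large.
have /card_gt0P[c] : 0 < #|[set~ b]| by rewrite cardsC1; lia.
rewrite !inE => cb.
have q_ge : 1 + (2 * t + 2 <= #|T|) <= #|T| %/ t.+1.
  by rewrite leq_divRL //; have := max_card (R b); case: (leqP (2 * t + 2)); lia.
move: (2 * t + 2 <= #|T|) pairK q_ge => e pairK q_ge.
have bK : #|R b| <= 2 * t + 1 + e by have := pairK c; rewrite eq_sym => /(_ cb); lia.
rewrite (bigD1 b) //=.
have : \sum_(j | j != b) #|R j| <= \sum_(j | j != b) (2 * t + 1 + e - #|R b|).
  by apply: leq_sum => j jb; have := pairK j; rewrite eq_sym => /(_ jb); lia.
rewrite sum_nat_const cardC1.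
have [m ->] : exists m, #|I| = m.+2 by exists (#|I| - 2); lia.
rewrite mulSn; move Ey: (2 * t + 1 + e - #|R b|) => y.
have : m * y <= m * (t + e - 1) by apply: leq_mul; lia.
by case: e q_ge bK Ey {pairK}; nia.
Qed.

Lemma sum_card_small : (forall j, #|R j| <= t.+1) ->
  \sum_j #|R j| <= t * #|I| + #|T| %/ t.+1.
Proof.
move=> small; set J := [set j | #|R j| == t.+1].
have JT : #|J| * t.+1 <= #|T|.
  rewrite -sum_nat_const (eq_bigr (fun j => #|R j|)); last first.
    by move=> j; rewrite inE => /eqP ->.
  apply: sum_card_disjoint => b c; rewrite !inE => /eqP bt /eqP ct bc.
  apply/negPn/negP; rewrite -setI_eq0 => /set0Pn[a]; rewrite inE => /andP[ab ac].
  by have := card_pair_meet bc ab ac; lia.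
apply: (@leq_trans (\sum_j (t + (j \in J)))).
  by apply: leq_sum => j _; have := small j; rewrite inE; case: eqP; lia.
by rewrite big_split sum_nat_const sum_mem_card mulnC leq_add2l leq_divRL.
Qed.

Lemma sum_card_pair_bound : 1 < #|I| -> \sum_j #|R j| <= t * #|I| + #|T| %/ t.+1.
Proof.
move=> I2; have [b large|small] := pickP [pred j | t.+2 <= #|R j|].
  exact: sum_card_large large.
by apply: sum_card_small => j; have := small j; rewrite /= ltnNge => /negbFE.
Qed.
End PairBound.


Section Lines.
Variables (T1 T2 : finType) (S : {set T1 * T2}).

Definition rowset (i : T1) : {set T2} := [set j | (i, j) \in S].
Definition colset (j : T2) : {set T1} := [set i | (i, j) \in S].

Lemma sum_eq_mem (w : T1 * T2) : \sum_(z in S) (z == w) = (w \in S).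
Proof.
case: (boolP (w \in S)) => wS; last first.
  by rewrite big1 // => z zS; case: eqP => // zw; rewrite -zw zS in wS.
by rewrite (bigD1 w) //= eqxx big1 // => z /andP[_ /negbTE ->].
Qed.

Lemma sum_eq_fst i : \sum_(z in S) (z.1 == i) = #|rowset i|.
Proof.
have pair_inj : injective (pair i : T2 -> T1 * T2) by move=> j j' [].
rewrite -big_mkcondr sum1dep_card -(card_imset _ pair_inj).
apply: eq_card => -[i' j]; rewrite !inE /=.
apply/andP/imsetP => [[zS /eqP ii]|[j' + [-> ->]]]; last by rewrite inE eqxx => ->.
by exists j; [rewrite inE -ii | rewrite ii].
Qed.

Lemma sum_eq_snd j : \sum_(z in S) (z.2 == j) = #|colset j|.
Proof.
have pair_inj : injective (fun i : T1 => (i, j)) by move=> i i' [].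
rewrite -big_mkcondr sum1dep_card -(card_imset _ pair_inj).
apply: eq_card => -[i j']; rewrite !inE /=.
apply/andP/imsetP => [[zS /eqP jj]|[i' + [-> ->]]]; last by rewrite inE eqxx => ->.
by exists i; [rewrite inE -jj | rewrite jj].
Qed.

Lemma card_sum_colset : #|S| = \sum_j #|colset j|.
Proof.
under eq_bigr do rewrite -sum_eq_snd.
rewrite exchange_big -sum1_card; apply: eq_bigr => z _.
by rewrite (bigD1 z.2) //= eqxx big1 // => j; rewrite eq_sym => /negbTE ->.
Qed.

End Lines.

Lemma colsetC (T1 T2 : finType) (S : {set T1 * T2}) j :
  colset (~: S) j = ~: colset S j.
Proof. by apply/setP => i; rewrite !inE. Qed.

Lemma rowsetC (T1 T2 : finType) (S : {set T1 * T2}) i :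
  rowset (~: S) i = ~: rowset S i.
Proof. by apply/setP => j; rewrite !inE. Qed.

Lemma card_setC (T : finType) (A : {set T}) : #|~: A| = #|T| - #|A|.
Proof. by rewrite cardsCs setCK. Qed.

Lemma exists_ord_neq2 n (u v : 'I_n) : 3 <= n -> exists p : 'I_n, (p != u) && (p != v).
Proof.
move=> n3; have /card_gt0P[p] : 0 < #|~: [set u; v]|.
  by rewrite card_setC cards2 card_ord; lia.
by rewrite !inE => /norP[pu pv]; exists p; rewrite pu pv.
Qed.

Definition KnxKn_dist n (x y : 'I_n * 'I_n) : nat :=
  if x == y then 0 else if KnxKn_adj n x y then 1 else 2.

Lemma gdist_KnxKn n (x y : 'I_n * 'I_n) : 3 <= n ->
  gdist (KnxKn_adj n) x y = KnxKn_dist x y.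
Proof.
move=> n3; set e := KnxKn_adj n.
have ball1 z : (z \in ball e 1 x) = (z == x) || e x z.
  rewrite /= !inE; congr (_ || _); apply/existsP/idP => [[w]|exz].
    by rewrite inE => /andP[/eqP->].
  by exists x; rewrite inE eqxx.
have ball2 : y \in ball e 2 x.
  have [p /andP[px py]] := exists_ord_neq2 x.1 y.1 n3.
  have [q /andP[qx qy]] := exists_ord_neq2 x.2 y.2 n3.
  rewrite /= inE; apply/orP; right; rewrite inE; apply/existsP; exists (p, q).
  by rewrite ball1 /e /KnxKn_adj /= ![_ == p]eq_sym ![_ == q]eq_sym px qx py qy orbT.
rewrite /gdist card_prod card_ord.
have -> : iota 0 (n * n) = [:: 0, 1, 2 & iota 3 (n * n - 3)].
  by rewrite -{1}(subnKC (_ : 3 <= n * n)) ?iotaD //; nia.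
rewrite /= ball1 ball2 inE /KnxKn_dist [y == x]eq_sym.
by case: (x == y) => //; rewrite /e; case: KnxKn_adj.
Qed.

Ltac decide_eqs := repeat match goal with
  | H : is_true (?u != ?v) |- context [?u == ?v] => rewrite (negbTE H)
  | H : is_true (?u != ?v) |- context [?v == ?u] => rewrite [v == u]eq_sym (negbTE H)
  end; rewrite ?eqxx //=.

Lemma absdiff_KnxKn_dist_row n (a b c : 'I_n) z : b != c ->
  absdiff (KnxKn_dist (a, b) z) (KnxKn_dist (a, c) z) =
  (z.2 == b) + (z.2 == c) + (z == (a, b)) + (z == (a, c)).
Proof.
move=> bc; case: z => p q; rewrite /KnxKn_dist /absdiff /KnxKn_adj !xpair_eqE /=.
case: (q =P b) => [->|/eqP qb]; last case: (q =P c) => [->|/eqP qc];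
  case: (p =P a) => [->|/eqP pa]; by decide_eqs.
Qed.

Lemma absdiff_KnxKn_dist_col n (a b c : 'I_n) z : a != c ->
  absdiff (KnxKn_dist (a, b) z) (KnxKn_dist (c, b) z) =
  (z.1 == a) + (z.1 == c) + (z == (a, b)) + (z == (c, b)).
Proof.
move=> ac; case: z => p q; rewrite /KnxKn_dist /absdiff /KnxKn_adj !xpair_eqE /=.
case: (p =P a) => [->|/eqP pa]; last case: (p =P c) => [->|/eqP pc];
  case: (q =P b) => [->|/eqP qb]; by decide_eqs.
Qed.

Lemma absdiff_KnxKn_dist_gen n (a b c d : 'I_n) z : a != c -> b != d ->
  absdiff (KnxKn_dist (a, b) z) (KnxKn_dist (c, d) z) + (z == (a, b)) + (z == (c, d))
    + 2 * (z == (a, d)) + 2 * (z == (c, b)) =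
  (z.1 == a) + (z.1 == c) + (z.2 == b) + (z.2 == d).
Proof.
move=> ac bd; case: z => p q; rewrite /KnxKn_dist /absdiff /KnxKn_adj !xpair_eqE /=.
case: (p =P a) => [->|/eqP pa]; last case: (p =P c) => [->|/eqP pc];
  (case: (q =P b) => [->|/eqP qb]; last case: (q =P d) => [->|/eqP qd]); by decide_eqs.
Qed.

Lemma Delta_S_row n (S : {set 'I_n * 'I_n}) (a b c : 'I_n) : 3 <= n -> b != c ->
  Delta_S (KnxKn_adj n) S (a, b) (a, c) =
  #|colset S b| + #|colset S c| + ((a, b) \in S) + ((a, c) \in S).
Proof.
move=> n3 bc; rewrite /Delta_S /Delta_z.
under eq_bigr do rewrite !gdist_KnxKn // absdiff_KnxKn_dist_row //.
by rewrite !big_split /= !sum_eq_snd !sum_eq_mem.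
Qed.

Lemma Delta_S_col n (S : {set 'I_n * 'I_n}) (a b c : 'I_n) : 3 <= n -> a != c ->
  Delta_S (KnxKn_adj n) S (a, b) (c, b) =
  #|rowset S a| + #|rowset S c| + ((a, b) \in S) + ((c, b) \in S).
Proof.
move=> n3 ac; rewrite /Delta_S /Delta_z.
under eq_bigr do rewrite !gdist_KnxKn // absdiff_KnxKn_dist_col //.
by rewrite !big_split /= !sum_eq_fst !sum_eq_mem.
Qed.

Lemma Delta_S_gen n (S : {set 'I_n * 'I_n}) (a b c d : 'I_n) :
  3 <= n -> a != c -> b != d ->
  Delta_S (KnxKn_adj n) S (a, b) (c, d) + ((a, b) \in S) + ((c, d) \in S)
    + 2 * ((a, d) \in S) + 2 * ((c, b) \in S) =
  #|rowset S a| + #|rowset S c| + #|colset S b| + #|colset S d|.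
Proof.
move=> n3 ac bd.
rewrite -!sum_eq_mem -!sum_eq_fst -!sum_eq_snd !big_distrr /Delta_S -!big_split /=.
by apply: eq_bigr => z _; rewrite /Delta_z !gdist_KnxKn // absdiff_KnxKn_dist_gen.
Qed.

Lemma KnxKn_weak_resolving_card_lb n t (S : {set 'I_n * 'I_n}) : 3 <= n -> t < n ->
  weak_k_resolving (KnxKn_adj n) (2 * n - 2 * t - 1) S ->
  n ^ 2 - t * n - n %/ t.+1 <= #|S|.
Proof.
move=> n3 tn resS; pose R := colset (~: S).
have pairR a b c : b != c -> #|R b| + #|R c| + (a \in R b) + (a \in R c) <= 2 * t + 3.
  move=> bc; have := resS (a, b) (a, c).
  rewrite xpair_eqE eqxx /= Delta_S_row // => /(_ bc).
  rewrite /R !colsetC !inE !card_setC card_ord.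
  have := max_card (colset S b); have := max_card (colset S c); rewrite card_ord.
  by case: ((a, b) \in S); case: ((a, c) \in S); lia.
have := sum_card_pair_bound pairR; rewrite !card_ord => /(_ (ltnW n3)).
rewrite -card_sum_colset card_setC card_prod card_ord -mulnn.
(* [set] identifies the two elaborations of [#|S|], over ['I_n * 'I_n] and
   over the product of finTypes. *)
by set s := #|S|; lia.
Qed.

Lemma card_ord_lt n m : m <= n -> #|[set k : 'I_n | k < m]| = m.
Proof.
move=> mn; have widen_inj : injective (widen_ord mn) by move=> k k' [] /val_inj.
rewrite -[RHS]card_ord -(card_imset _ widen_inj); apply: eq_card => k; rewrite inE.
apply/idP/imsetP => [km|[k' _ ->]]; last exact: (ltn_ord k').
by exists (Ordinal km) => //; apply: val_inj.
Qed.

Lemma card_inj_ord_lt n (f : 'I_n -> 'I_n) m : injective f -> m <= n ->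
  #|[set k | f k < m]| = m.
Proof.
move=> finj mn; rewrite -[RHS](card_ord_lt mn) -[RHS](card_preimset _ finj).
by apply: eq_card => k; rewrite !inE.
Qed.

Lemma dvdn_window_eq d j j' x : d.+1 %| j -> d.+1 %| j' ->
  j <= x <= j + d -> j' <= x <= j' + d -> j = j'.
Proof.
have window_div m : m * d.+1 <= x <= m * d.+1 + d -> x %/ d.+1 = m.
  case/andP => lo hi; rewrite -(subnKC lo) divnMDl // divn_small ?addn0 //; lia.
by move=> /dvdnP[m ->] /dvdnP[m' ->] /window_div <- /window_div <-.
Qed.

Section Band.
Variables n t : nat.

Definition cdist (j i : nat) : nat := if j <= i then i - j else i + n - j.

Definition special (j : nat) : bool := (t.+1 %| j) && (j + t < n).

Definition special_row (i : nat) : bool := (t <= i) && special (i - t).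

Definition inW (i j : nat) : bool := cdist j i < t + special j.

Definition Wset : {set 'I_n * 'I_n} := [set z : 'I_n * 'I_n | inW z.1 z.2].

Lemma cdist_lt i j : i < n -> j < n -> cdist j i < n.
Proof. by rewrite /cdist; case: ifP; lia. Qed.

Lemma card_colset_Wset (j : 'I_n) : t < n -> #|colset Wset j| = t + special j.
Proof.
move=> tn; pose f i := Ordinal (cdist_lt (ltn_ord i) (ltn_ord j)).
have finj : injective f.
  move=> i1 i2 /(congr1 val); rewrite /= /cdist => e; apply: val_inj => /=.
  by move: e (ltn_ord i1) (ltn_ord i2) (ltn_ord j); case: ifP; case: ifP; lia.
rewrite -(card_inj_ord_lt finj (_ : t + special j <= n)); last by case: (special j); lia.
by apply: eq_card => i; rewrite !inE.
Qed.

Lemma cdist_eq_special i j : i < n -> special j -> cdist j i = t -> i = j + t.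
Proof. by move=> ilt /andP[_ jt]; rewrite /cdist; case: ifP; lia. Qed.

Lemma card_rowset_Wset (i : 'I_n) : t <= n -> #|rowset Wset i| <= t + special_row i.
Proof.
move=> tn; pose f j := Ordinal (cdist_lt (ltn_ord i) (ltn_ord j)).
have finj : injective f.
  move=> j1 j2 /(congr1 val); rewrite /= /cdist => e; apply: val_inj => /=.
  by move: e (ltn_ord j1) (ltn_ord j2) (ltn_ord i); case: ifP; case: ifP; lia.
have sub : rowset Wset i \subset
    [set j | f j < t] :|: [set j : 'I_n | special_row i && (val j == i - t)].
  apply/subsetP => j; rewrite !inE /inW /=.
  case: (boolP (special j)) => sj; last by rewrite addn0 => ->.
  rewrite addn1 ltnS leq_eqVlt => /orP[/eqP e|->] //.
  by rewrite /special_row (cdist_eq_special (ltn_ord i) sj e) leq_addl addnK sj eqxx orbT.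
apply: (leq_trans (subset_leq_card sub)); apply: (leq_trans (leq_card_setU _ _)).
rewrite card_inj_ord_lt // leq_add2l; case: (special_row i); last first.
  by rewrite leqn0 cards_eq0; apply/eqP/setP => j; rewrite !inE.
by apply/card_le1_eqP => j1 j2; rewrite !inE => /eqP e1 /eqP e2; apply: val_inj; rewrite e1.
Qed.

Lemma inW_cdist i j : inW i j -> cdist j i <= t.
Proof. by rewrite /inW; case: (special j); lia. Qed.

Lemma inW_window_col i j : i < n -> special j -> inW i j -> j <= i <= j + t.
Proof. by move=> ilt /[dup] /andP[_ jt] sj /inW_cdist; rewrite /cdist; case: ifP; lia. Qed.

Lemma inW_window_row i j : j < n -> t <= i -> inW i j -> i - t <= j <= i.
Proof. by move=> jlt ti /inW_cdist; rewrite /cdist; case: ifP; lia. Qed.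

Lemma inW_cap j : special j -> inW (j + t) j.
Proof. by move=> sj; rewrite /inW /cdist sj leq_addr addKn addn1. Qed.

Lemma special_small j : 6 <= n -> n <= t + 4 -> special j ->
  j = 0 \/ (n = 6 /\ t = 2 /\ j = 3).
Proof.
move=> n_ge6 small /andP[/dvdnP[m ->] jt].
by case: m jt => [|[|m]] jt; [left | right | exfalso]; nia.
Qed.

Lemma card_special : #|[set j : 'I_n | special j]| = n %/ t.+1.
Proof.
have mul_lt (k : 'I_(n %/ t.+1)) : k * t.+1 + t < n.
  by have := ltn_ord k; rewrite leq_divRL // mulSn; lia.
pose g k := Ordinal (leq_ltn_trans (leq_addr _ _) (mul_lt k)).
have ginj : injective g by move=> k k' [] /eqP; rewrite eqn_mul2r => /eqP/val_inj.
rewrite -[RHS]card_ord -(card_imset _ ginj); apply: eq_card => j; rewrite inE.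
apply/idP/imsetP => [/andP[dvd_j jt]|[k _ ->]]; last by rewrite /special /= dvdn_mull // mul_lt.
have jq : j %/ t.+1 < n %/ t.+1 by rewrite leq_divRL // mulSn divnK //; lia.
by exists (Ordinal jq) => //; apply: val_inj; rewrite /= divnK.
Qed.

Lemma card_Wset : t < n -> #|Wset| = t * n + n %/ t.+1.
Proof.
move=> tn; rewrite card_sum_colset (eq_bigr _ (fun j _ => card_colset_Wset j tn)).
rewrite big_split sum_nat_const card_ord -card_special -sum_mem_card mulnC.
by congr (_ + _); apply: eq_bigr => j _; rewrite inE.
Qed.

Lemma special_window_eq i j j' : i < n -> special j -> special j' ->
  inW i j -> inW i j' -> j = j'.
Proof.
move=> ilt sj sj' /(inW_window_col ilt sj) wj /(inW_window_col ilt sj') wj'.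
by case/andP: sj => dj _; case/andP: sj' => dj' _; apply: dvdn_window_eq dj dj' wj wj'.
Qed.

Lemma special_row_window_eq i i' j : j < n -> special_row i -> special_row i' ->
  inW i j -> inW i' j -> i = i'.
Proof.
move=> jlt /andP[ti /andP[di _]] /andP[ti' /andP[di' _]].
move=> /(inW_window_row jlt ti) wi /(inW_window_row jlt ti') wi'.
have := dvdn_window_eq di di' (_ : _ <= j <= _) (_ : _ <= j <= _); lia.
Qed.

(* For n >= t + 5 there is room for all four special indicators.  Otherwise
   the special columns are 0 and, only when (n, t) = (6, 2), also 3; so once
   enough of a, c, b, d are special, some extra cell (j + t, j) is one of the
   four cells of the grid {a, c} x {b, d}. *)
Lemma grid_bonus a b c d : 6 <= n -> t + 3 <= n -> a != c -> b != d ->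
  special_row a + special_row c + special b + special d + 2 * t + 5
    <= 2 * n + [|| inW a b, inW a d, inW c b | inW c d].
Proof.
move=> n_ge6 tn /eqP ac /eqP bd; have [large|small] := leqP (t + 5) n.
  by case: (special_row a) (special_row c) (special b) (special d) => [] [] [] []; lia.
have rowE i : special_row i -> i = t \/ (n = 6 /\ t = 2 /\ i = 5).
  by case/andP => ti /special_small; lia.
have colE j : special j -> j = 0 \/ (n = 6 /\ t = 2 /\ j = 3) by apply: special_small; lia.
set w := [|| _, _, _ | _].
have capb : special b -> a = b + t \/ c = b + t -> w.
  by move=> sb; rewrite /w; case=> ->; rewrite inW_cap ?orbT.
have capd : special d -> a = d + t \/ c = d + t -> w.
  by move=> sd; rewrite /w; case=> ->; rewrite inW_cap ?orbT.
move: (rowE a) (rowE c) (colE b) (colE d) capb capd; clearbody w.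
by case: (special_row a) (special_row c) (special b) (special d) w => [] [] [] [] []; lia.
Qed.

Lemma card_colset_Wset_compl (j : 'I_n) : t < n ->
  #|colset (~: Wset) j| = n - (t + special j).
Proof. by move=> tn; rewrite colsetC card_setC card_ord card_colset_Wset. Qed.

Lemma card_rowset_Wset_compl (i : 'I_n) : t <= n ->
  n - (t + special_row i) <= #|rowset (~: Wset) i|.
Proof. by move=> tn; rewrite rowsetC card_setC card_ord leq_sub2l // card_rowset_Wset. Qed.

Lemma in_Wset_compl (i j : 'I_n) : ((i, j) \in ~: Wset) = ~~ inW i j.
Proof. by rewrite !inE. Qed.

Hypotheses (n_ge6 : 6 <= n) (tn : t + 3 <= n).

Let n_ge3 : 3 <= n. Proof. lia. Qed.
Let t_lt_n : t < n. Proof. lia. Qed.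

Lemma Delta_Wset_compl_row (a b d : 'I_n) : b != d ->
  2 * n - 2 * t - 1 <= Delta_S (KnxKn_adj n) (~: Wset) (a, b) (a, d).
Proof.
move=> bd; have : ~~ [&& special b, special d, inW a b & inW a d].
  apply/negP => /and4P[sb sd wb wd].
  by move/val_inj: (special_window_eq (ltn_ord a) sb sd wb wd) bd => ->; rewrite eqxx.
rewrite Delta_S_row // !in_Wset_compl !card_colset_Wset_compl //.
by case: (special b) (special d) (inW a b) (inW a d) => [] [] [] [] //=; lia.
Qed.

Lemma Delta_Wset_compl_col (a c b : 'I_n) : a != c ->
  2 * n - 2 * t - 1 <= Delta_S (KnxKn_adj n) (~: Wset) (a, b) (c, b).
Proof.
move=> ac; have : ~~ [&& special_row a, special_row c, inW a b & inW c b].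
  apply/negP => /and4P[sa sc wa wc].
  by move/val_inj: (special_row_window_eq (ltn_ord b) sa sc wa wc) ac => ->; rewrite eqxx.
rewrite Delta_S_col // !in_Wset_compl.
have := card_rowset_Wset_compl a (ltnW t_lt_n).
have := card_rowset_Wset_compl c (ltnW t_lt_n).
by case: (special_row a) (special_row c) (inW a b) (inW c b) => [] [] [] [] //=; lia.
Qed.

Lemma Delta_Wset_compl_gen (a b c d : 'I_n) : a != c -> b != d ->
  2 * n - 2 * t - 1 <= Delta_S (KnxKn_adj n) (~: Wset) (a, b) (c, d).
Proof.
move=> ac bd; have := Delta_S_gen (~: Wset) n_ge3 ac bd.
rewrite !in_Wset_compl !card_colset_Wset_compl //.
have := grid_bonus n_ge6 tn ac bd.
have := card_rowset_Wset_compl a (ltnW t_lt_n).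
have := card_rowset_Wset_compl c (ltnW t_lt_n).
by case: (inW a b) (inW c d) (inW a d) (inW c b) => [] [] [] [] /=; lia.
Qed.

End Band.

Lemma Wset_compl_weak_resolving n t : 6 <= n -> t + 3 <= n ->
  weak_k_resolving (KnxKn_adj n) (2 * n - 2 * t - 1) (~: Wset n t).
Proof.
move=> n_ge6 tn [a b] [c d]; case: (eqVneq a c) => [<-|ac].
  by rewrite xpair_eqE eqxx => bd; apply: Delta_Wset_compl_row.
case: (eqVneq b d) => [<- _|bd _]; first exact: Delta_Wset_compl_col.
exact: Delta_Wset_compl_gen.
Qed.

Theorem mainTheorem11 (n t : nat) :
  6 <= n -> 1 <= t -> t <= n - 3 ->
  is_wdim (KnxKn_adj n) (2 * n - 2 * t - 1) (n ^ 2 - t * n - n %/ t.+1).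
Proof.
move=> n_ge6 _ tn; split; last by move=> S; apply: KnxKn_weak_resolving_card_lb; lia.
exists (~: Wset n t); split; first by apply: Wset_compl_weak_resolving; lia.
by rewrite card_setC card_prod card_ord card_Wset ?mulnn ?subnDA //; lia.
Qed.
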